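(* Under the setting below, suppose additionally that $\underline y\le Y(a_{1:t})\le\overline y$ almost surely. If $\mathbb{P}(A_{1:t}=a_{1:t}\mid X_{0:N}(A_{1:N})\in B_{0:N})>\mathbb{P}(A_{1:t}=a_{1:t})$, then $$\mathbb{E}[\overline Y]-\mathbb{E}[\underline Y]>\mathbb{E}[\overline Y\mid X_{0:N}(A_{1:N})\in B_{0:N}]-\mathbb{E}[\underline Y\mid X_{0:N}(A_{1:N})\in B_{0:N}].$$
   Context: Horizon $T\ge1$, $\mathcal{X}_t=\mathbb{R}^{d_t}$, finite action spaces $\mathcal{A}_t$; potential outcomes $X_0$, $X_t(a_{1:t})\in\mathcal{X}_t$, random actions $A_{1:T}$, and real-valued potential outcomes $Y(a_{1:t})$ defined jointly; $X_{0:t}(a_{1:t})=(X_0,X_1(a_1),\dots,X_t(a_{1:t}))$. Fixed $t\in\{1,\dots,T\}$, $a_{1:t}\in\mathcal{A}_{1:t}$, measurable $B_{0:t}=B_0\times\cdots\times B_t$ with $\mathbb{P}(X_{0:t}(a_{1:t})\in B_{0:t})>0$, and $\underline y,\overline y\in\mathbb{R}$. $N=\max\{0\le s\le t:A_{1:s}=a_{1:s}\}$; $\underline Y=\mathbb{1}(A_{1:t}=a_{1:t})Y(A_{1:t})+\mathbb{1}(A_{1:t}\ne a_{1:t})\underline y$ and $\overline Y$ likewise with $\overline y$. Quantities evaluated at random actions denote the potential outcome indexed by the realized actions. *)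

From HB Require Import structures.
From mathcomp Require Import all_boot all_order all_algebra.
From mathcomp Require Import all_classical all_reals all_analysis.
Set Implicit Arguments. Unset Strict Implicit. Unset Printing Implicit Defensive.
Import Order.TTheory GRing.Theory Num.Theory.
Local Open Scope classical_set_scope.
Local Open Scope ring_scope.

(* Action histories a_{1:s} = (a_1,...,a_s), with a_j in Act j. *)
Definition hist (Act : nat -> finType) (s : nat) := forall i : 'I_s, Act i.+1.

Section defs.
Context (Omega : Type) (Act : nat -> finType).
Variable A : forall i : nat, Omega -> Act i.

Definition Ahist (s : nat) (w : Omega) : hist Act s := fun i => A i.+1 w.
Arguments Ahist s w i : clear implicits.

Definition prefix_match (t : nat) (a : hist Act t) (s : nat) (w : Omega) : bool :=
  [forall i : 'I_t, (i < s)%N ==> (A i.+1 w == a i)].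

Definition full_match (t : nat) (a : hist Act t) (w : Omega) : bool :=
  [forall i : 'I_t, A i.+1 w == a i].

Definition Nidx (t : nat) (a : hist Act t) (w : Omega) : nat :=
  (\max_(s < t.+1 | prefix_match a s w) (s : nat))%N.

Definition eventXB (d : nat -> nat) (R : Type)
  (X : forall s : nat, hist Act s -> Omega -> (d s).-tuple R)
  (B : forall s : nat, set ((d s).-tuple R)) (t : nat) (a : hist Act t) : set Omega :=
  [set w | forall s : 'I_t.+1, (s <= Nidx a w)%N -> B s (X s (Ahist s w) w)].

(* underline Y / overline Y with fallback value y0 *)
Definition Ybound (R : Type) (Y : forall s : nat, hist Act s -> Omega -> R)
  (t : nat) (a : hist Act t) (y0 : R) (w : Omega) : R :=
  if full_match a w then Y t (Ahist t w) w else y0.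
End defs.
Arguments Ahist {Omega Act} A s w i.
Arguments prefix_match {Omega Act} A {t} a s w.
Arguments full_match {Omega Act} A {t} a w.
Arguments Nidx {Omega Act} A {t} a w.
Arguments eventXB {Omega Act} A {d R} X B {t} a.
Arguments Ybound {Omega Act} A {R} Y {t} a y0 w.

Section prob.
Context (d : measure_display) (Omega : measurableType d) (R : realType).
Variable P : probability Omega R.

Definition expect (f : Omega -> R) : R := fine (\int[P]_x (f x)%:E).

Definition cond_expect (f : Omega -> R) (E : set Omega) : R :=
  fine (\int[P]_(x in E) (f x)%:E) / fine (P E).

Definition prob (F : set Omega) : R := fine (P F).

Definition cond_prob (F E : set Omega) : R := fine (P (F `&` E)) / fine (P E).
End prob.

(* Writing F for the event {A_{1:t} = a_{1:t}}, the bounds Ybar and Yunder agree on F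
   and differ by the constant yhi - ylo off F. Hence, conditionally on any event E of
   positive probability (including E = Omega), E[Ybar | E] - E[Yunder | E] equals
   (yhi - ylo) (1 - P(F | E)), and the claim is the hypothesis P(F | E) > P(F)
   multiplied by yhi - ylo > 0. The event {s <= N} is {A_{1:s} = a_{1:s}}, which makes
   {X_{0:N}(A_{1:N}) in B_{0:N}} a finite intersection of measurable events; the
   almost sure bounds on Y only serve to make all expectations finite. *)

From HB Require Import structures.
From mathcomp Require Import all_boot all_order all_algebra.
From mathcomp Require Import all_classical all_reals all_analysis.
From mathcomp Require Import measurable_realfun.
From mathcomp Require Import ring lra.
Import Order.TTheory GRing.Theory Num.Theory.
Local Open Scope classical_set_scope.
Local Open Scope ring_scope.

Lemma measurable_forall d (T : measurableType d) (I : finType) (Q : I -> set T) :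
  (forall i, measurable (Q i)) -> measurable [set x | forall i, Q i x].
Proof.
move=> mQ; rewrite (_ : [set x | _] = \bigcap_(i in setT) Q i).
  by apply: fin_bigcap_measurable => //; exact: finite_finset.
by apply/seteqP; split=> x /= Qx i //; exact: Qx.
Qed.

Section histories.
Context {Omega : Type} {Act : nat -> finType} {A : forall i : nat, Omega -> Act i}.

Definition hist_take {t} (a : hist Act t) (s : 'I_t.+1) : hist Act s :=
  fun i : 'I_s => a (widen_ord (ltnSE (ltn_ord s)) i).

Lemma full_match_Ahist {t} {a : hist Act t} {w} : full_match A a w -> Ahist A t w = a.
Proof. by move/forallP=> Aa; apply: functional_extensionality_dep => i; exact/eqP. Qed.

Lemma prefix_match_Ahist {t} {a : hist Act t} {s : 'I_t.+1} {w} :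
  prefix_match A a s w -> Ahist A s w = hist_take a s.
Proof.
move/forallP=> Aa; apply: functional_extensionality_dep => i.
by have /implyP/(_ (ltn_ord i))/eqP := Aa (widen_ord (ltnSE (ltn_ord s)) i).
Qed.

Lemma leq_Nidx {t} (a : hist Act t) (s : 'I_t.+1) w :
  (s <= Nidx A a w)%N = prefix_match A a s w.
Proof.
apply/idP/idP => [|Aa]; last exact: (leq_bigmax_cond _ Aa).
have ne : (0 < #|[pred s : 'I_t.+1 | prefix_match A a s w]|)%N.
  by apply/card_gt0P; exists ord0; rewrite inE; apply/forallP.
have [N AaN maxN] := eq_bigmax_cond (fun s : 'I_t.+1 => (s : nat)) ne.
rewrite inE in AaN; rewrite /Nidx maxN => sN; apply/forallP => i; apply/implyP => si.
by have /implyP := forallP AaN i; apply; exact: leq_trans si sN.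
Qed.

Lemma eventXB_prefix {dim : nat -> nat} {R : Type}
    (X : forall s : nat, hist Act s -> Omega -> (dim s).-tuple R)
    (B : forall s : nat, set ((dim s).-tuple R)) {t} (a : hist Act t) :
  eventXB A X B a =
  [set w | forall s : 'I_t.+1, prefix_match A a s w -> B s (X s (hist_take a s) w)].
Proof.
apply/seteqP; split=> w /= XB s Aa.
  by have := XB s; rewrite leq_Nidx (prefix_match_Ahist Aa); apply.
by rewrite leq_Nidx in Aa; rewrite (prefix_match_Ahist Aa); exact: XB.
Qed.

Lemma Ybound_full {R : Type} (Y : forall s : nat, hist Act s -> Omega -> R)
    {t} (a : hist Act t) (y0 : R) :
  Ybound A Y a y0 = fun w => if full_match A a w then Y t a w else y0.
Proof. by apply: funext => w; rewrite /Ybound; case: ifP => // /full_match_Ahist ->. Qed.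
End histories.
Arguments hist_take {Act t} a s i.

Section measurable_histories.
Context {d : measure_display} {Omega : measurableType d} {Act : nat -> finType}
  {A : forall i : nat, Omega -> Act i}
  (mA : forall (i : nat) (v : Act i), measurable (A i @^-1` [set v])).

Lemma measurable_full_match {t} (a : hist Act t) : measurable [set w | full_match A a w].
Proof.
rewrite (_ : [set w | _] = [set w | forall i : 'I_t, (A i.+1 @^-1` [set a i]) w]).
  by apply: measurable_forall => i; exact: mA.
apply/seteqP; split=> w /=; first by move/forallP => Aa i; apply/eqP/Aa.
by move=> Aa; apply/forallP => i; apply/eqP/Aa.
Qed.

Lemma measurable_prefix_match {t} (a : hist Act t) s :
  measurable [set w | prefix_match A a s w].
Proof.
rewrite (_ : [set w | _] = [set w | forall i : 'I_t,
    (if (i < s)%N then A i.+1 @^-1` [set a i] else setT) w]).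
  by apply: measurable_forall => i; case: ifP => _ //; exact: mA.
apply/seteqP; split=> w /=.
  by move/forallP => Aa i; have := Aa i; case: ifP => //= _ /eqP.
by move=> Aa; apply/forallP => i; have := Aa i; case: ifP => //= _ ->.
Qed.

Lemma measurable_eventXB {dim : nat -> nat} {R : realType}
    (X : forall s : nat, hist Act s -> Omega -> (dim s).-tuple R)
    (B : forall s : nat, set ((dim s).-tuple R)) {t} (a : hist Act t) :
  (forall s h, measurable_fun setT (X s h)) -> (forall s, measurable (B s)) ->
  measurable (eventXB A X B a).
Proof.
move=> mX mB; rewrite eventXB_prefix.
rewrite (_ : [set w | _] = [set w | forall s : 'I_t.+1,
    (~` [set w | prefix_match A a s w] `|` X s (hist_take a s) @^-1` B s) w]).
  apply: measurable_forall => s; apply: measurableU.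
    exact/measurableC/measurable_prefix_match.
  by rewrite -[_ @^-1` _]setTI; exact: mX measurableT _ (mB s).
apply/seteqP; split=> w /= XB s.
  by have [Aa|] := boolP (prefix_match A a s w); [right; exact: XB | left].
by move=> Aa; case: (XB s).
Qed.
End measurable_histories.

Section finite_measure_integrals.
Context {d : measure_display} {T : measurableType d} {R : realType}.
Variable mu : {finite_measure set T -> \bar R}.

Lemma integrable_ae_bounded D (f : T -> R) lo hi :
  measurable D -> measurable_fun D f -> {ae mu, forall x, lo <= f x <= hi} ->
  mu.-integrable D (EFin \o f).
Proof.
move=> mD mf fb; apply/integrableP; split; first exact/measurable_EFinP.
apply: (@le_lt_trans _ _ (\int[mu]_(x in D) (`|lo| + `|hi|)%:E)%E).
  apply: ae_ge0_le_integral => //.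
    exact/measurableT_comp/measurable_EFinP.
  apply: filterS fb => x /andP[lof fhi] _; rewrite /= lee_fin.
  have := normr_ge0 lo; have := normr_ge0 hi; have := ler_norm hi.
  by have := ler_norm (- lo); rewrite normrN ler_norml => *; apply/andP; split; lra.
by rewrite integral_cst // ltey_eq fin_numM ?fin_num_measure.
Qed.

Lemma integral_if_cstB {D} {b : T -> bool} {f : T -> R} {lo hi} y1 y0 :
  measurable D -> measurable [set x | b x] -> measurable_fun setT f ->
  {ae mu, forall x, lo <= f x <= hi} ->
  fine (\int[mu]_(x in D) (if b x then f x else y1)%:E)
    - fine (\int[mu]_(x in D) (if b x then f x else y0)%:E)
  = (y1 - y0) * fine (mu (D `\` [set x | b x])).
Proof.
move=> mD mb mf fb.
have mbf : measurable_fun setT b by apply: (measurable_fun_bool true); rewrite setTI.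
have ib y : mu.-integrable D (EFin \o (fun x => if b x then f x else y)).
  apply: (@integrable_ae_bounded _ _ (Num.min lo y) (Num.max hi y) mD).
    exact: measurable_funS (subsetT D) (measurable_fun_ifT mbf mf (measurable_cst y)).
  apply: filterS fb => x /andP[lof fhi].
  by case: (b x); rewrite ge_min le_max ?lof ?fhi ?lexx ?orbT.
have fin y : (\int[mu]_(x in D) (if b x then f x else y)%:E)%E \is a fin_num.
  exact: integrable_fin_num (ib y).
rewrite -fineB // -(integralB_EFin mD (ib y1) (ib y0)).
rewrite (eq_integral (fun x => (y1 - y0)%:E * (\1_(~` [set x | b x]) x)%:E)%E); last first.
  move=> x _; rewrite indicE -EFinM; congr EFin.
  have [bx|nbx] := boolP (b x); rewrite in_setC.
    by rewrite (mem_set (A := [set x | b x]) bx) subrr mulr0.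
  by rewrite (memNset (A := [set x | b x])) ?mulr1 //; apply/negP.
have mCb : measurable (~` [set x | b x]) by exact: measurableC.
rewrite (integralZl mD (integrableS measurableT mD (subsetT D) (integrable_indic mu mCb))).
rewrite integral_indic // setIC -setDE fineM //.
exact/fin_num_measure/measurableD.
Qed.
End finite_measure_integrals.

Section conditioning.
Context {d : measure_display} {Omega : measurableType d} {R : realType}.
Variable P : probability Omega R.

Lemma expect_cond_setT (f : Omega -> R) : expect P f = cond_expect P f setT.
Proof. by rewrite /cond_expect probability_setT divr1. Qed.

Lemma prob_cond_setT (F : set Omega) : prob P F = cond_prob P F setT.
Proof. by rewrite /cond_prob setIT probability_setT divr1. Qed.

Lemma cond_expect_if_cstB {E} {b : Omega -> bool} {f : Omega -> R} {lo hi} y1 y0 :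
  measurable E -> (0 < P E)%E -> measurable [set x | b x] -> measurable_fun setT f ->
  {ae P, forall x, lo <= f x <= hi} ->
  cond_expect P (fun x => if b x then f x else y1) E
    - cond_expect P (fun x => if b x then f x else y0) E
  = (y1 - y0) * (1 - cond_prob P [set x | b x] E).
Proof.
move=> mE PE mb mf fb; have finE S : measurable S -> P S \is a fin_num.
  exact: fin_num_measure.
rewrite /cond_expect /cond_prob -mulrBl (integral_if_cstB _ _ _ mE mb mf fb).
rewrite measureD ?ltey_eq ?finE // fineB ?finE //; last exact: measurableI.
have : fine (P E) != 0 by rewrite gt_eqF // fine_gt0 // PE ltey_eq finE.
by rewrite [_ `&` E]setIC => ?; field.
Qed.
End conditioning.

Theorem proposition4p5
  (R : realType) (dO : measure_display) (Omega : measurableType dO)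
  (P : probability Omega R)
  (T : nat) (dim : nat -> nat) (Act : nat -> finType)
  (X : forall s : nat, hist Act s -> Omega -> (dim s).-tuple R)
  (A : forall i : nat, Omega -> Act i)
  (Y : forall s : nat, hist Act s -> Omega -> R)
  (hX : forall (s : nat) (h : hist Act s), measurable_fun setT (X s h))
  (hA : forall (i : nat) (v : Act i), measurable (A i @^-1` [set v]))
  (hY : forall (s : nat) (h : hist Act s), measurable_fun setT (Y s h))
  (t : nat) (ht1 : (1 <= t)%N) (htT : (t <= T)%N)
  (a : hist Act t)
  (B : forall s : nat, set ((dim s).-tuple R))
  (hB : forall s : nat, measurable (B s))
  (hpos : (0 < P [set w | forall s : 'I_t.+1,
                            B s (X s (fun i : 'I_s => a (widen_ord (ltnSE (ltn_ord s)) i)) w)])%E)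
  (ylo yhi : R) (hlohi : ylo < yhi)
  (hbd : {ae P, forall w, ylo <= Y t a w <= yhi}) :
  cond_prob P [set w | full_match A a w] (eventXB A X B a)
    > prob P [set w | full_match A a w] ->
  expect P (Ybound A Y a yhi) - expect P (Ybound A Y a ylo)
    > cond_expect P (Ybound A Y a yhi) (eventXB A X B a)
      - cond_expect P (Ybound A Y a ylo) (eventXB A X B a).
Proof.
move=> more_likely.
have mF := measurable_full_match hA a.
have mE := measurable_eventXB hA X B a hX hB.
have PE : (0 < P (eventXB A X B a))%E.
  apply: (lt_le_trans hpos); apply: le_measure; rewrite ?inE //.
    apply: measurable_forall => s.
    by have := hX s (hist_take a s) measurableT _ (hB s); rewrite setTI.
  by rewrite eventXB_prefix => w XB s _; exact: XB.
rewrite !Ybound_full !expect_cond_setT.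
rewrite !(cond_expect_if_cstB P _ _ _ _ mF (hY t a) hbd) //.
  by rewrite ltr_pM2l ?subr_gt0 // ltrD2l ltrN2 -prob_cond_setT.
by rewrite probability_setT.
Qed.
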